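(* In the While-language extended with non-deterministic input, for every command $c$ and stores $\sigma,\sigma''$: if $(c,\sigma,\Downarrow)\Rightarrow^{co}_G\sigma'',\Uparrow$, then there exist $c',\sigma'$ such that $(c,\sigma)\to(c',\sigma')$ and $(c',\sigma',\Downarrow)\Rightarrow^{co}_G\sigma'',\Uparrow$.
   Context: Extended While-language syntax: variables $x$ range over a countably infinite set $\mathit{Var}$; $n$ ranges over natural numbers; values are $v ::= \mathsf{null}\mid n$ ($\mathsf{null}$ distinct from every natural number); expressions are $e ::= v\mid x\mid e_1\oplus e_2\mid\mathsf{input}$ with $\oplus\in\{+,-,*\}$, where $\oplus(n_1,n_2)$ is the result of the operation on naturals; commands are $c ::= \mathsf{skip}\mid\mathsf{alloc}\ x\mid x:=e\mid c_1;c_2\mid \mathsf{if}\ e\ c_1\ c_2\mid\mathsf{while}\ e\ c$. A store $\sigma$ is a finite partial map from $\mathit{Var}$ to values, with domain $\mathrm{dom}(\sigma)$, lookup $\sigma(x)$, update $\sigma[x\mapsto v]$. Expression evaluation $(e,\sigma)\Rightarrow_E v$ is the least relation with: $(v,\sigma)\Rightarrow_E v$; $(x,\sigma)\Rightarrow_E\sigma(x)$ if $x\in\mathrm{dom}(\sigma)$; if $(e_1,\sigma)\Rightarrow_E n_1$ and $(e_2,\sigma)\Rightarrow_E n_2$ with $n_1,n_2$ naturals then $(e_1\oplus e_2,\sigma)\Rightarrow_E\oplus(n_1,n_2)$; and $(\mathsf{input},\sigma)\Rightarrow_E v$ for every value $v$. Small-step relation $(c,\sigma)\to(c',\sigma')$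 is the least relation with: $(\mathsf{alloc}\ x,\sigma)\to(\mathsf{skip},\sigma[x\mapsto\mathsf{null}])$ if $x\notin\mathrm{dom}(\sigma)$; $(x:=e,\sigma)\to(\mathsf{skip},\sigma[x\mapsto v])$ if $x\in\mathrm{dom}(\sigma)$ and $(e,\sigma)\Rightarrow_E v$; $(c_1;c_2,\sigma)\to(c_1';c_2,\sigma')$ if $(c_1,\sigma)\to(c_1',\sigma')$; $(\mathsf{skip};c_2,\sigma)\to(c_2,\sigma)$; $(\mathsf{if}\ e\ c_1\ c_2,\sigma)\to(c_1,\sigma)$ if $(e,\sigma)\Rightarrow_E v$, $v\neq 0$; $(\mathsf{if}\ e\ c_1\ c_2,\sigma)\to(c_2,\sigma)$ if $(e,\sigma)\Rightarrow_E 0$; $(\mathsf{while}\ e\ c,\sigma)\to(c;\mathsf{while}\ e\ c,\sigma)$ if $(e,\sigma)\Rightarrow_E v$, $v\neq0$; $(\mathsf{while}\ e\ c,\sigma)\to(\mathsf{skip},\sigma)$ if $(e,\sigma)\Rightarrow_E 0$. Flag-based big-step semantics: status flags $\delta ::= \Downarrow\mid\Uparrow$. Expression evaluation $(e,\sigma,\delta)\Rightarrow_{GE}v,\delta'$ is the least relation with: $(v,\sigma,\Downarrow)\Rightarrow_{GE}v,\Downarrow$; $(x,\sigma,\Downarrow)\Rightarrow_{GE}\sigma(x),\Downarrow$ if $x\in\mathrm{dom}(\sigma)$; if $(e_1,\sigma,\Downarrow)\Rightarrow_{GE}n_1,\delta$ and $(e_2,\sigma,\delta)\Rightarrow_{GE}n_2,\delta'$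 ($n_1,n_2$ naturals) then $(e_1\oplus e_2,\sigma,\Downarrow)\Rightarrow_{GE}\oplus(n_1,n_2),\delta'$; $(\mathsf{input},\sigma,\Downarrow)\Rightarrow_{GE}v,\Downarrow$ for every value $v$; and $(e,\sigma,\Uparrow)\Rightarrow_{GE}v,\Uparrow$ for every value $v$. The command rules for judgments $(c,\sigma,\delta)\Rightarrow_G\sigma',\delta'$ are: $(\mathsf{skip},\sigma,\Downarrow)\Rightarrow_G\sigma,\Downarrow$; $(\mathsf{alloc}\ x,\sigma,\Downarrow)\Rightarrow_G\sigma[x\mapsto\mathsf{null}],\Downarrow$ if $x\notin\mathrm{dom}(\sigma)$; $(x:=e,\sigma,\Downarrow)\Rightarrow_G\sigma[x\mapsto v],\delta$ if $x\in\mathrm{dom}(\sigma)$ and $(e,\sigma,\Downarrow)\Rightarrow_{GE}v,\delta$; $(c_1;c_2,\sigma,\Downarrow)\Rightarrow_G\sigma'',\delta'$ if $(c_1,\sigma,\Downarrow)\Rightarrow_G\sigma',\delta$ and $(c_2,\sigma',\delta)\Rightarrow_G\sigma'',\delta'$; $(\mathsf{if}\ e\ c_1\ c_2,\sigma,\Downarrow)\Rightarrow_G\sigma',\delta'$ if $v\ne0$, $(e,\sigma,\Downarrow)\Rightarrow_{GE}v,\delta$ and $(c_1,\sigma,\delta)\Rightarrow_G\sigma',\delta'$; $(\mathsf{if}\ e\ c_1\ c_2,\sigma,\Downarrow)\Rightarrow_G\sigma',\delta'$ if $(e,\sigma,\Downarrow)\Rightarrow_{GE}0,\delta$ and $(c_2,\sigma,\delta)\Rightarrow_G\sigma',\delta'$;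 $(\mathsf{while}\ e\ c,\sigma,\Downarrow)\Rightarrow_G\sigma'',\delta''$ if $(e,\sigma,\Downarrow)\Rightarrow_{GE}v,\delta$, $v\ne0$, $(c,\sigma,\delta)\Rightarrow_G\sigma',\delta'$ and $(\mathsf{while}\ e\ c,\sigma',\delta')\Rightarrow_G\sigma'',\delta''$; $(\mathsf{while}\ e\ c,\sigma,\Downarrow)\Rightarrow_G\sigma,\delta$ if $(e,\sigma,\Downarrow)\Rightarrow_{GE}0,\delta$; $(c,\sigma,\Uparrow)\Rightarrow_G\sigma',\Uparrow$ for every store $\sigma'$. $\Rightarrow^{co}_G$ is the coinductive interpretation of these command rules (greatest relation such that every element is the conclusion of a rule instance whose command premises lie in it). *)

From Stdlib Require Import List Arith.
Import ListNotations.

Definition var := nat.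

Inductive value : Type := Vnull | Vnat (n : nat).

Inductive binop : Type := Plus | Minus | Mult.

Definition eval_op (o : binop) (n1 n2 : nat) : nat :=
  match o with Plus => n1 + n2 | Minus => n1 - n2 | Mult => n1 * n2 end.

Inductive expr : Type :=
| Eval (v : value)
| Evar (x : var)
| Eop (o : binop) (e1 e2 : expr)
| Einput.

Inductive cmd : Type :=
| Skip
| Alloc (x : var)
| Assign (x : var) (e : expr)
| Seq (c1 c2 : cmd)
| If (e : expr) (c1 c2 : cmd)
| While (e : expr) (c : cmd).

Definition finite_dom (f : var -> option value) : Prop :=
  exists l : list var, forall x, f x <> None -> In x l.

Definition store := { f : var -> option value | finite_dom f }.

Definition lookup (s : store) (x : var) : option value := proj1_sig s x.

Definition in_dom (x : var) (s : store) : Prop := lookup s x <> None.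

Definition upd_fun (f : var -> option value) (x : var) (v : value) :=
  fun y => if Nat.eqb y x then Some v else f y.

Lemma upd_finite (f : var -> option value) (x : var) (v : value) :
  finite_dom f -> finite_dom (upd_fun f x v).
Proof.
  intros [l Hl]. exists (x :: l). intros y Hy. unfold upd_fun in Hy.
  destruct (Nat.eqb y x) eqn:E.
  - left. symmetry. apply Nat.eqb_eq. exact E.
  - right. apply Hl. exact Hy.
Defined.

Definition update (s : store) (x : var) (v : value) : store :=
  exist _ (upd_fun (proj1_sig s) x v) (upd_finite _ x v (proj2_sig s)).

Inductive eval_expr : expr -> store -> value -> Prop :=
| EE_val : forall v s, eval_expr (Eval v) s v
| EE_var : forall x s v, lookup s x = Some v -> eval_expr (Evar x) s v
| EE_op : forall o e1 e2 s n1 n2,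
    eval_expr e1 s (Vnat n1) -> eval_expr e2 s (Vnat n2) ->
    eval_expr (Eop o e1 e2) s (Vnat (eval_op o n1 n2))
| EE_input : forall s v, eval_expr Einput s v.

Inductive step : cmd -> store -> cmd -> store -> Prop :=
| S_alloc : forall x s, ~ in_dom x s -> step (Alloc x) s Skip (update s x Vnull)
| S_assign : forall x e s v, in_dom x s -> eval_expr e s v ->
    step (Assign x e) s Skip (update s x v)
| S_seq : forall c1 c1' c2 s s', step c1 s c1' s' -> step (Seq c1 c2) s (Seq c1' c2) s'
| S_seqskip : forall c2 s, step (Seq Skip c2) s c2 s
| S_if_true : forall e c1 c2 s v, eval_expr e s v -> v <> Vnat 0 -> step (If e c1 c2) s c1 s
| S_if_false : forall e c1 c2 s, eval_expr e s (Vnat 0) -> step (If e c1 c2) s c2 s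
| S_while_true : forall e c s v, eval_expr e s v -> v <> Vnat 0 ->
    step (While e c) s (Seq c (While e c)) s
| S_while_false : forall e c s, eval_expr e s (Vnat 0) -> step (While e c) s Skip s.

(* Status flags: Conv = ⇓ (converging), Div = ⇑ (diverging). *)
Inductive flag : Type := Conv | Div.

Inductive geval_expr : expr -> store -> flag -> value -> flag -> Prop :=
| GE_val : forall v s, geval_expr (Eval v) s Conv v Conv
| GE_var : forall x s v, lookup s x = Some v -> geval_expr (Evar x) s Conv v Conv
| GE_op : forall o e1 e2 s n1 n2 d d',
    geval_expr e1 s Conv (Vnat n1) d -> geval_expr e2 s d (Vnat n2) d' ->
    geval_expr (Eop o e1 e2) s Conv (Vnat (eval_op o n1 n2)) d'
| GE_input : forall s v, geval_expr Einput s Conv v Conv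
| GE_div : forall e s v, geval_expr e s Div v Div.

(* Coinductive interpretation ⇒^co_G of the flag-based command rules:
   cobig c σ δ σ' δ'  means  (c, σ, δ) ⇒^co_G σ', δ'. *)
CoInductive cobig : cmd -> store -> flag -> store -> flag -> Prop :=
| G_skip : forall s, cobig Skip s Conv s Conv
| G_alloc : forall x s, ~ in_dom x s -> cobig (Alloc x) s Conv (update s x Vnull) Conv
| G_assign : forall x e s v d, in_dom x s -> geval_expr e s Conv v d ->
    cobig (Assign x e) s Conv (update s x v) d
| G_seq : forall c1 c2 s s' s'' d d',
    cobig c1 s Conv s' d -> cobig c2 s' d s'' d' -> cobig (Seq c1 c2) s Conv s'' d'
| G_if_true : forall e c1 c2 s s' v d d', v <> Vnat 0 ->
    geval_expr e s Conv v d -> cobig c1 s d s' d' -> cobig (If e c1 c2) s Conv s' d'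
| G_if_false : forall e c1 c2 s s' d d',
    geval_expr e s Conv (Vnat 0) d -> cobig c2 s d s' d' -> cobig (If e c1 c2) s Conv s' d'
| G_while_true : forall e c s s' s'' v d d' d'',
    geval_expr e s Conv v d -> v <> Vnat 0 -> cobig c s d s' d' ->
    cobig (While e c) s' d' s'' d'' -> cobig (While e c) s Conv s'' d''
| G_while_false : forall e c s d,
    geval_expr e s Conv (Vnat 0) d -> cobig (While e c) s Conv s d
| G_div : forall c s s', cobig c s Div s' Div.


(* Proof idea: started with flag Conv, flag-based expression evaluation never
   raises Div and coincides with ordinary evaluation.  Hence the root rule of a
   coinductive derivation for a command other than skip licenses a small step,
   and the premises of that rule reassemble into a derivation for the residual
   command with the same final store and flag. *)

Lemma geval_conv_eval : forall e s v d,
  geval_expr e s Conv v d -> d = Conv /\ eval_expr e s v.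
Proof.
  intros e s v d H. remember Conv as d0 eqn:E.
  induction H; try discriminate.
  - split; [reflexivity | constructor].
  - split; [reflexivity | constructor; assumption].
  - destruct (IHgeval_expr1 E) as [-> H1].
    destruct (IHgeval_expr2 E) as [-> H2].
    split; [reflexivity | constructor; assumption].
  - split; [reflexivity | constructor].
Qed.

Lemma cobig_skip_inv : forall s s'' d,
  cobig Skip s Conv s'' d -> s'' = s /\ d = Conv.
Proof. intros s s'' d H. inversion H; subst. split; reflexivity. Qed.

Ltac guard_from_conv :=
  match goal with
  | Hg : geval_expr _ _ Conv _ _ |- _ => destruct (geval_conv_eval _ _ _ _ Hg) as [-> ?]
  end.

Lemma cobig_progress : forall c s s'' d,
  cobig c s Conv s'' d -> c <> Skip ->
  exists c' s', step c s c' s' /\ cobig c' s' Conv s'' d.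
Proof.
  induction c as [| x | x e | c1 IHc1 c2 _ | e c1 _ c2 _ | e c _];
    intros s s'' d H Hne; inversion H; subst.
  - congruence.
  - eexists; eexists; split; [constructor; assumption | constructor].
  - guard_from_conv.
    eexists; eexists; split; [econstructor; eassumption | constructor].
  - assert (Hc1 : c1 = Skip \/ c1 <> Skip) by (destruct c1; [left | right ..]; congruence).
    destruct Hc1 as [-> | Hc1].
    + match goal with Hs : cobig Skip _ _ _ _ |- _ => destruct (cobig_skip_inv _ _ _ Hs) as [-> ->] end.
      eexists; eexists; split; [apply S_seqskip | eassumption].
    + match goal with H1 : cobig c1 _ _ _ _ |- _ => destruct (IHc1 _ _ _ H1 Hc1) as (c1' & s1 & Hstep & Hc1') end.
      eexists; eexists; split; [constructor; eassumption | econstructor; eassumption].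
  - guard_from_conv.
    eexists; eexists; split; [eapply S_if_true; eassumption | eassumption].
  - guard_from_conv.
    eexists; eexists; split; [eapply S_if_false; eassumption | eassumption].
  - guard_from_conv.
    eexists; eexists; split; [eapply S_while_true; eassumption | econstructor; eassumption].
  - guard_from_conv.
    eexists; eexists; split; [eapply S_while_false; eassumption | constructor].
Qed.

Theorem lemma28 : forall (c : cmd) (s s'' : store),
  cobig c s Conv s'' Div ->
  exists (c' : cmd) (s' : store), step c s c' s' /\ cobig c' s' Conv s'' Div.
Proof.
  intros c s s'' H. apply cobig_progress; [exact H |].
  intros ->. destruct (cobig_skip_inv _ _ _ H) as [_ Hdiv]. discriminate.
Qed.
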